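(* Let $p>1$ be an integer and let $u^{(p)}$ be the fixed point of the substitution $\varphi_p(L)=L^pS$, $\varphi_p(S)=M$, $\varphi_p(M)=L^{p-1}S$. Then $\mathrm{AC}(n)\ge 3$ for all $n\in\mathbb N$.
   Context: $u^{(p)}=\lim_{n\to\infty}\varphi_p^n(L)$. For a finite word $w$, its Parikh vector is $\Psi(w)=(|w|_L,|w|_S,|w|_M)$, where $|w|_a$ is the number of occurrences of $a$ in $w$. The Abelian complexity of $u^{(p)}$ is $\mathrm{AC}(n)=\#\{\Psi(w): w \text{ a factor of } u^{(p)} \text{ of length } n\}$. *)

From HB Require Import structures.
From mathcomp Require Import all_boot finmap.
From mathcomp Require Import boolp classical_sets cardinality.
Set Implicit Arguments. Unset Strict Implicit. Unset Printing Implicit Defensive.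

Inductive letter := L | S | M.

Definition letter_eqb (a b : letter) : bool :=
  match a, b with L, L | S, S | M, M => true | _, _ => false end.
Lemma letter_eqP : Equality.axiom letter_eqb.
Proof. by case; case; constructor. Qed.
HB.instance Definition _ := hasDecEq.Build letter letter_eqP.

Definition phi_letter (p : nat) (a : letter) : seq letter :=
  match a with
  | L => nseq p L ++ [:: S]
  | S => [:: M]
  | M => nseq p.-1 L ++ [:: S]
  end.

Definition phi (p : nat) (w : seq letter) : seq letter :=
  flatten (map (phi_letter p) w).

Definition phi_iter (p k : nat) : seq letter := iter k (phi p) [:: L].

(* The fixed point u^(p) = lim_k phi_p^k(L).  Since phi_p(L) starts with L,
   each phi_p^k(L) is a prefix of phi_p^(k+1)(L), and |phi_p^(i+1)(L)| > i,
   so the i-th letter of the limit is the i-th letter of phi_p^(i+1)(L). *)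
Definition u (p : nat) (i : nat) : letter := nth L (phi_iter p i.+1) i.

Definition factor (p i n : nat) : seq letter := [seq u p (i + k) | k <- iota 0 n].

Definition parikh (w : seq letter) : nat * nat * nat :=
  (count_mem L w, count_mem S w, count_mem M w).

Definition abelian_complexity (p n : nat) : nat :=
  #|` fset_set [set parikh (factor p i n) | i in [set: nat]] |.

From Stdlib Require Import ZArith Lia.
From mathcomp Require Import all_boot finmap.
From mathcomp Require Import boolp classical_sets cardinality.
From mathcomp Require Import zify.
Set Implicit Arguments. Unset Strict Implicit. Unset Printing Implicit Defensive.

(* If the number of occurrences of a letter c in the factors of length n of
   u^(p) were a constant k, every prefix w would be balanced:
   |n |w|_c - k |w|| <= n^2.  So the linear form y = n e_c - k (1,1,1) would be
   bounded on the Parikh vectors of prefixes, and so would A^T y and (A^T)^2 y,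
   since phi_p maps prefixes to prefixes and acts on Parikh vectors through its
   incidence matrix A.  These three forms are linearly independent: their
   determinant is a cubic form in (n, k) with no zero in 0 <= k <= n, a shadow
   of the irreducibility of the characteristic polynomial x^3 - p x^2 - x + 1
   over Q.  Cramer's rule would then bound the lengths of all prefixes.
   Hence every letter count varies among the factors of length n.  Two
   consecutive factors with distinct Parikh vectors differ by exchanging
   letters a <> b; the third letter c has the same count in both, and a factor
   with another count of c provides a third Parikh vector. *)

Lemma parikh_count_eq (w1 w2 : seq letter) x :
  parikh w1 = parikh w2 -> count_mem x w1 = count_mem x w2.
Proof. by case: x => -[eqL eqS eqM]. Qed.

Section Factors.
Variable p : nat.

Lemma size_factor i n : size (factor p i n) = n.
Proof. by rewrite size_map size_iota. Qed.

Lemma count_factor_le x i n : count_mem x (factor p i n) <= n.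
Proof. by rewrite -{2}(size_factor i n) count_size. Qed.

Lemma factor_cat i a b : factor p i (a + b) = factor p i a ++ factor p (i + a) b.
Proof.
rewrite /factor iotaD map_cat add0n; congr (_ ++ _).
by rewrite -[a in iota a]addn0 iotaDl -map_comp; apply: eq_map => x /=; rewrite addnA.
Qed.

Lemma factor_cons i n : factor p i n.+1 = u p i :: factor p i.+1 n.
Proof. by rewrite -add1n factor_cat addn1 /factor /= addn0. Qed.

Lemma factor_rcons i n : factor p i n.+1 = rcons (factor p i n) (u p (i + n)).
Proof. by rewrite -addn1 factor_cat cats1 /factor /= addn0. Qed.

Lemma count_factor_succ x i n :
  count_mem x (factor p i n) + (u p (i + n) == x) =
  (u p i == x) + count_mem x (factor p i.+1 n).
Proof.
have := congr1 (count_mem x) (etrans (esym (factor_rcons i n)) (factor_cons i n)).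
by rewrite -cats1 count_cat /= addn0.
Qed.

Lemma parikh_factor_succ i n :
  u p i = u p (i + n) -> parikh (factor p i.+1 n) = parikh (factor p i n).
Proof.
move=> ends_eq; suff count_eq x : count_mem x (factor p i.+1 n) = count_mem x (factor p i n).
  by rewrite /parikh !count_eq.
by apply/eqP; rewrite -(eqn_add2l (u p i == x)) -count_factor_succ ends_eq addnC.
Qed.

Lemma count_factor_succ_other x i n : u p i != x -> u p (i + n) != x ->
  count_mem x (factor p i.+1 n) = count_mem x (factor p i n).
Proof.
move=> /negbTE first_ne /negbTE last_ne.
by have := count_factor_succ x i n; rewrite first_ne last_ne addn0.
Qed.

End Factors.

Section Substitution.
Variable p : nat.

Lemma phi_cat s t : phi p (s ++ t) = phi p s ++ phi p t.
Proof. by rewrite /phi map_cat flatten_cat. Qed.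

Lemma phi_cons a s : phi p (a :: s) = phi_letter p a ++ phi p s.
Proof. by []. Qed.

Lemma size_phi s : size s <= size (phi p s).
Proof.
elim: s => // a s IH; rewrite phi_cons size_cat.
suff : 0 < size (phi_letter p a) by move: IH => /=; lia.
by case: a; rewrite /= ?size_cat ?addn1.
Qed.

Lemma count_phi_L w : count_mem L (phi p w) = p * count_mem L w + p.-1 * count_mem M w.
Proof.
elim: w => [|a w IH]; first by rewrite !muln0.
by rewrite phi_cons count_cat IH; case: a; rewrite /= ?count_cat ?count_nseq /=; lia.
Qed.

Lemma count_phi_S w : count_mem S (phi p w) = count_mem L w + count_mem M w.
Proof.
elim: w => // a w IH.
by rewrite phi_cons count_cat IH; case: a; rewrite /= ?count_cat ?count_nseq /=; lia.
Qed.

Lemma count_phi_M w : count_mem M (phi p w) = count_mem S w.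
Proof.
elim: w => // a w IH.
by rewrite phi_cons count_cat IH; case: a; rewrite /= ?count_cat ?count_nseq /=; lia.
Qed.

End Substitution.

Lemma size_count_letters (w : seq letter) :
  size w = count_mem L w + count_mem S w + count_mem M w.
Proof. by elim: w => // a w IH; case: a; rewrite /= IH ?addSn ?addnS. Qed.

Section FixedPoint.
Variable p : nat.
Hypothesis p_gt1 : 1 < p.

Lemma phi_iterS k : phi_iter p k.+1 = phi p (phi_iter p k).
Proof. by rewrite /phi_iter iterS. Qed.

Lemma phi_iter_prefix k : exists t, phi_iter p k.+1 = phi_iter p k ++ t.
Proof.
elim: k => [|k [t IH]].
  by case: p p_gt1 => // q _; exists (nseq q L ++ [:: S]); rewrite /phi_iter /phi /= cats0.
by exists (phi p t); rewrite phi_iterS IH phi_cat -IH.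
Qed.

Lemma phi_iter_prefix_le k k' : k <= k' -> exists t, phi_iter p k' = phi_iter p k ++ t.
Proof.
move=> /subnK <-; elim: (k' - k) => [|d [t IH]]; first by exists [::]; rewrite cats0.
have [t' ->] := phi_iter_prefix (d + k).
by exists (t ++ t'); rewrite IH catA.
Qed.

Lemma phi_iter_head k : exists t, phi_iter p k = L :: t.
Proof.
have [t ->] := phi_iter_prefix_le (leq0n k).
by exists t.
Qed.

Lemma size_phi_iter k : k < size (phi_iter p k).
Proof.
elim: k => // k IH; have [t def_k] := phi_iter_head k.
rewrite phi_iterS def_k phi_cons !size_cat size_nseq.
by move: IH (size_phi p t); rewrite def_k /=; lia.
Qed.

Lemma u_nth k i : i < size (phi_iter p k) -> u p i = nth L (phi_iter p k) i.
Proof.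
move=> lt_i; rewrite /u.
have [t1 def_k] := phi_iter_prefix_le (leq_maxl k i.+1).
have [t2 def_i] := phi_iter_prefix_le (leq_maxr k i.+1).
have := congr1 (nth L ^~ i) (etrans (esym def_k) def_i).
by rewrite /= !nth_cat lt_i (ltnW (size_phi_iter _)) => ->.
Qed.

Lemma factor0_take k l : l <= size (phi_iter p k) -> factor p 0 l = take l (phi_iter p k).
Proof.
move=> le_l; apply: (@eq_from_nth _ L); first by rewrite size_factor size_take_min; lia.
move=> i; rewrite size_factor => lt_i.
rewrite (nth_map 0) ?size_iota // nth_iota // nth_take //.
by apply: u_nth; lia.
Qed.

Lemma phi_factor0 l : phi p (factor p 0 l) = factor p 0 (size (phi p (factor p 0 l))).
Proof.
have le_l : l <= size (phi_iter p l) by apply/ltnW/size_phi_iter.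
rewrite (factor0_take le_l).
have def_phi : phi p (phi_iter p l) =
    phi p (take l (phi_iter p l)) ++ phi p (drop l (phi_iter p l)).
  by rewrite -phi_cat cat_take_drop.
by rewrite (@factor0_take l.+1) phi_iterS def_phi ?take_size_cat // size_cat leq_addr.
Qed.

End FixedPoint.

Section CubicForms.
Local Open Scope Z_scope.

Definition cubic (a b c d n k : Z) := a * n ^ 3 + b * n ^ 2 * k + c * n * k ^ 2 + d * k ^ 3.

Lemma cubic_scale a b c d g n k :
  cubic a b c d (g * n) (g * k) = g ^ 3 * cubic a b c d n k.
Proof. rewrite /cubic; ring. Qed.

Lemma cubic_root_dvd a b c d n k : Z.gcd n k = 1 -> cubic a b c d n k = 0 ->
  (n | d) /\ (k | a).
Proof.
move=> nk_coprime root.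
have kn_coprime : Z.gcd k n = 1 by rewrite Z.gcd_comm.
split.
- have : (n | k * (k * (k * d))).
    by exists (- (a * n ^ 2 + b * n * k + c * k ^ 2)); rewrite /cubic in root; nia.
  by do 3 move/Z.gauss/(_ nk_coprime).
- have : (k | n * (n * (n * a))).
    by exists (- (b * n ^ 2 + c * n * k + d * k ^ 2)); rewrite /cubic in root; nia.
  by do 3 move/Z.gauss/(_ kn_coprime).
Qed.

Lemma cubic_neq0_of_coprime a b c d :
  (forall n k, Z.gcd n k = 1 -> 1 <= n -> 0 <= k <= n -> cubic a b c d n k <> 0) ->
  forall n k, 1 <= n -> 0 <= k <= n -> cubic a b c d n k <> 0.
Proof.
move=> coprime_case n k n_pos k_range.
set g := Z.gcd n k.
have g_pos : 0 < g.
  have := Z.gcd_nonneg n k; have := Z.gcd_eq_0_l n k; rewrite -/g; lia.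
have [n' def_n] := Z.gcd_divide_l n k.
have [k' def_k] := Z.gcd_divide_r n k.
rewrite -/g in def_n def_k.
have coprime' : Z.gcd n' k' = 1.
  by have := Z.gcd_div_gcd n k g (Z.neq_sym _ _ (Z.lt_neq _ _ g_pos)) erefl;
     rewrite def_n def_k !Z.div_mul; lia.
rewrite def_n def_k (Z.mul_comm n') (Z.mul_comm k') cubic_scale.
apply/Z.neq_mul_0; split; first by apply: Z.pow_nonzero; lia.
apply: coprime_case => //; nia.
Qed.

Lemma cubic_L_neq0 P n k : 2 <= P -> 1 <= n -> 0 <= k <= n ->
  cubic (- (P - 1)) (P - 1) 2 (-1) n k <> 0.
Proof.
move=> P_ge2; apply: cubic_neq0_of_coprime => {}n {}k coprime n_pos k_range root.
have [/Z.divide_opp_r/Z.divide_1_r n_unit _] := cubic_root_dvd coprime root.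
have {n_unit} n_eq1 : n = 1 by lia.
have [k_eq | k_eq] : k = 0 \/ k = 1 by lia.
all: by move: root; rewrite /cubic n_eq1 k_eq; lia.
Qed.

Lemma cubic_S_neq0 P n k : 2 <= P -> 1 <= n -> 0 <= k <= n ->
  cubic 1 (- (P + 3)) (2 * P + 2) (- (P - 1)) n k <> 0.
Proof.
move=> P_ge2; apply: cubic_neq0_of_coprime => {}n {}k coprime n_pos k_range root.
have [_ /Z.divide_1_r k_unit] := cubic_root_dvd coprime root.
have k_eq1 : k = 1 by lia.
rewrite k_eq1 /cubic in root.
(* [cubic n 1 - cubic 1 1] is divisible by [n - 1], and [cubic 1 1 = 1]. *)
have /Z.divide_opp_r/Z.divide_1_r n_unit : (n - 1 | -1).
  by exists (n ^ 2 - (P + 2) * n + P); lia.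
have n_eq2 : n = 2 by lia.
by move: root; rewrite n_eq2; lia.
Qed.

Lemma cubic_M_neq0 P n k : 2 <= P -> 1 <= n -> 0 <= k <= n ->
  cubic (-1) (P * P + P + 2) (- (P + 3)) (- (P - 1)) n k <> 0.
Proof.
move=> P_ge2; apply: cubic_neq0_of_coprime => {}n {}k coprime n_pos k_range root.
have [/Z.divide_opp_r n_dvd /Z.divide_opp_r/Z.divide_1_r k_unit] :=
  cubic_root_dvd coprime root.
have n_le : n <= P - 1 by apply: (Z.divide_pos_le _ _ _ n_dvd); lia.
have k_eq1 : k = 1 by lia.
rewrite k_eq1 /cubic in root.
(* For [n <= P - 1] the middle term [(P^2 + P + 2) n^2] dominates. *)
have lead : n ^ 2 * (P * P + 3) <= n ^ 2 * (P * P + P + 2 - n) by nia.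
have inner : P * P - P <= n * (P * P + 3) - (P + 3) by nia.
have tail : P * P - P <= n * (n * (P * P + 3) - (P + 3)) by nia.
nia.
Qed.

End CubicForms.

Notation vec3 := (Z * Z * Z)%type.

Section Cramer.
Local Open Scope Z_scope.

Definition dot (a x : vec3) := a.1.1 * x.1.1 + a.1.2 * x.1.2 + a.2 * x.2.
Definition sum3 (a : vec3) := a.1.1 + a.1.2 + a.2.
Definition cross (a b : vec3) : vec3 :=
  (a.1.2 * b.2 - a.2 * b.1.2, a.2 * b.1.1 - a.1.1 * b.2, a.1.1 * b.1.2 - a.1.2 * b.1.1).
Definition det3 (a b c : vec3) := dot a (cross b c).

Lemma cramer_sum3 a b c x : det3 a b c * sum3 x =
  dot a x * sum3 (cross b c) + dot b x * sum3 (cross c a) + dot c x * sum3 (cross a b).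
Proof.
case: a => [[a1 a2] a3]; case: b => [[b1 b2] b3]; case: c => [[c1 c2] c3].
by case: x => [[x1 x2] x3]; rewrite /det3 /dot /cross /sum3 /=; ring.
Qed.

Lemma sum3_bounded_of_dots a b c B : det3 a b c <> 0 -> exists C, forall x,
  Z.abs (dot a x) <= B -> Z.abs (dot b x) <= B -> Z.abs (dot c x) <= B ->
  Z.abs (sum3 x) <= C.
Proof.
move=> det_neq0.
exists (B * (Z.abs (sum3 (cross b c)) + Z.abs (sum3 (cross c a)) + Z.abs (sum3 (cross a b)))).
move=> x bound_a bound_b bound_c.
have abs_mul_le D y : Z.abs D <= B -> Z.abs (D * y) <= B * Z.abs y.
  by move=> bound_D; rewrite Z.abs_mul; apply: Z.mul_le_mono_nonneg_r; lia.
have := f_equal Z.abs (cramer_sum3 a b c x); rewrite Z.abs_mul.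
have := abs_mul_le _ (sum3 (cross b c)) bound_a.
have := abs_mul_le _ (sum3 (cross c a)) bound_b.
have := abs_mul_le _ (sum3 (cross a b)) bound_c.
have := Z.abs_triangle (dot a x * sum3 (cross b c) + dot b x * sum3 (cross c a))
                       (dot c x * sum3 (cross a b)).
have := Z.abs_triangle (dot a x * sum3 (cross b c)) (dot b x * sum3 (cross c a)).
have : Z.abs (sum3 x) <= Z.abs (det3 a b c) * Z.abs (sum3 x).
  by rewrite -{1}(Z.mul_1_l (Z.abs (sum3 x))); apply: Z.mul_le_mono_nonneg_r; lia.
lia.
Qed.

End Cramer.

Section Balance.
Variable p : nat.
Hypothesis p_gt1 : (1 < p)%N.
Local Open Scope Z_scope.

Definition parikhZ (w : seq letter) : vec3 :=
  (Z.of_nat (count_mem L w), Z.of_nat (count_mem S w), Z.of_nat (count_mem M w)).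

Definition phiT (y : vec3) : vec3 :=
  (Z.of_nat p * y.1.1 + y.1.2, y.2, (Z.of_nat p - 1) * y.1.1 + y.1.2).

Lemma dot_parikhZ_phi y w : dot y (parikhZ (phi p w)) = dot (phiT y) (parikhZ w).
Proof.
have pred_p : Z.of_nat p.-1 = Z.of_nat p - 1 by lia.
rewrite /dot /parikhZ /phiT /= count_phi_L count_phi_S count_phi_M.
rewrite !Nat2Z.inj_add !Nat2Z.inj_mul pred_p.
move: (Z.of_nat (count_mem L w)) (Z.of_nat (count_mem S w)) (Z.of_nat (count_mem M w)).
by move=> cL cS cM; ring.
Qed.

Lemma sum3_parikhZ w : sum3 (parikhZ w) = Z.of_nat (size w).
Proof. by rewrite /sum3 /= size_count_letters !Nat2Z.inj_add. Qed.

Definition balance (c : letter) (n k : Z) : vec3 :=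
  match c with
  | L => (n - k, - k, - k)
  | S => (- k, n - k, - k)
  | M => (- k, - k, n - k)
  end.

Lemma dot_balance c n k w :
  dot (balance c n k) (parikhZ w) = n * Z.of_nat (count_mem c w) - k * Z.of_nat (size w).
Proof. by rewrite -sum3_parikhZ; case: c; rewrite /dot /sum3 /=; ring. Qed.

Lemma det_krylov_balance_neq0 c n k : 1 <= n -> 0 <= k <= n ->
  let y := balance c n k in det3 y (phiT y) (phiT (phiT y)) <> 0.
Proof.
move=> n_pos k_range /=; have P_ge2 : 2 <= Z.of_nat p by lia.
case: c; rewrite /det3 /dot /cross /phiT /=.
- rewrite (_ : _ + _ = (Z.of_nat p - 1) *
    cubic (- (Z.of_nat p - 1)) (Z.of_nat p - 1) 2 (-1) n k); last by rewrite /cubic; ring.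
  by apply/Z.neq_mul_0; split; [lia | exact: cubic_L_neq0].
- rewrite (_ : _ + _ = cubic 1 (- (Z.of_nat p + 3)) (2 * Z.of_nat p + 2)
    (- (Z.of_nat p - 1)) n k); last by rewrite /cubic; ring.
  exact: cubic_S_neq0.
- rewrite (_ : _ + _ = cubic (-1) (Z.of_nat p * Z.of_nat p + Z.of_nat p + 2)
    (- (Z.of_nat p + 3)) (- (Z.of_nat p - 1)) n k); last by rewrite /cubic; ring.
  exact: cubic_M_neq0.
Qed.

Lemma dot_phiT_prefix_bounded y B :
  (forall l, Z.abs (dot y (parikhZ (factor p 0 l))) <= B) ->
  forall l, Z.abs (dot (phiT y) (parikhZ (factor p 0 l))) <= B.
Proof. by move=> bounded l; rewrite -dot_parikhZ_phi phi_factor0. Qed.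

Section ConstantCount.
Variables (c : letter) (n k : nat).
Hypothesis n_pos : (0 < n)%N.
Hypothesis count_const : forall i, count_mem c (factor p i n) = k.

Lemma count_factor_mul i q : count_mem c (factor p i (q * n)) = (q * k)%N.
Proof.
elim: q i => // q IH i.
by rewrite mulSnr factor_cat count_cat IH count_const mulSnr.
Qed.

Lemma balance_prefix_bounded l :
  Z.abs (dot (balance c (Z.of_nat n) (Z.of_nat k)) (parikhZ (factor p 0 l))) <=
  Z.of_nat n * Z.of_nat n.
Proof.
have k_le_n : (k <= n)%N by rewrite -(count_const 0%N) count_factor_le.
have [q [r [-> r_lt_n]]] : exists q r, l = (q * n + r)%N /\ (r < n)%N.
  by exists (l %/ n)%N, (l %% n)%N; rewrite -divn_eq ltn_pmod.
rewrite dot_balance size_factor factor_cat count_cat count_factor_mul.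
have := @count_factor_le p c (0 + q * n) r.
nia.
Qed.

End ConstantCount.

Lemma count_factor_nonconstant c n k : (0 < n)%N ->
  ~ (forall i, count_mem c (factor p i n) = k).
Proof.
move=> n_pos count_const.
have k_le_n : (k <= n)%N by rewrite -(count_const 0%N) count_factor_le.
pose y := balance c (Z.of_nat n) (Z.of_nat k).
have det_neq0 : det3 y (phiT y) (phiT (phiT y)) <> 0.
  by apply: det_krylov_balance_neq0; lia.
have [C sum3_le_C] := sum3_bounded_of_dots (Z.of_nat n * Z.of_nat n) det_neq0.
have bounded0 := balance_prefix_bounded n_pos count_const.
have bounded1 := dot_phiT_prefix_bounded bounded0.
have bounded2 := dot_phiT_prefix_bounded bounded1.
pose l := (Z.to_nat C).+1.
have := sum3_le_C _ (bounded0 l) (bounded1 l) (bounded2 l).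
by rewrite sum3_parikhZ size_factor; lia.
Qed.

End Balance.

Lemma exists_letter_other (a b : letter) : exists c, a != c /\ b != c.
Proof. by case: a; case: b; by [exists L | exists S | exists M]. Qed.

Lemma three_le_card_fset_set (T : choiceType) (A : set T) a b c :
  finite_set A -> A a -> A b -> A c -> a != b -> a != c -> b != c ->
  3 <= #|` fset_set A|.
Proof.
move=> finA Aa Ab Ac ab ac bc.
have <- : #|` [fset a; b; c]%fset| = 3.
  by rewrite fsetUC cardfsU1 cardfs2 !inE ab (eq_sym c a) (negbTE ac) (eq_sym c b) (negbTE bc).
apply/fsubset_leq_card/fsubsetP => x.
by rewrite !inE -orbA => /or3P[] /eqP ->; rewrite in_fset_set // inE.
Qed.

Lemma finite_parikh_factors p n : finite_set [set parikh (factor p i n) | i in [set: nat]].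
Proof.
pose cut (t : 'I_n.+1 * 'I_n.+1 * 'I_n.+1) := (val t.1.1, val t.1.2, val t.2).
apply: (@sub_finite_set _ _ (cut @` setT)); last exact/finite_image/finite_finset.
move=> _ [i _ <-].
have bound x : count_mem x (factor p i n) < n.+1 by rewrite ltnS count_factor_le.
by exists (Ordinal (bound L), Ordinal (bound S), Ordinal (bound M)).
Qed.

Theorem proposition8p4 (p : nat) (hp : (1 < p)%N) (n : nat) (hn : (0 < n)%N) :
  (3 <= abelian_complexity p n)%N.
Proof.
have [i parikh_step] : exists i, parikh (factor p i n) <> parikh (factor p i.+1 n).
  apply/existsNP => parikh_const.
  apply: (count_factor_nonconstant hp hn (c := L) (k := count_mem L (factor p 0 n))).
  elim=> // j <-; apply: parikh_count_eq; exact/esym/parikh_const.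
have ends_neq : u p i != u p (i + n).
  by apply: contra_notN parikh_step => /eqP /parikh_factor_succ.
have [c [first_ne_c last_ne_c]] := exists_letter_other (u p i) (u p (i + n)).
have count_c_step := count_factor_succ_other first_ne_c last_ne_c.
have [j count_c_neq] : exists j, count_mem c (factor p j n) <> count_mem c (factor p i n).
  exact/existsNP/(count_factor_nonconstant hp hn (c := c)).
apply: (three_le_card_fset_set (finite_parikh_factors p n)
  (a := parikh (factor p i n)) (b := parikh (factor p i.+1 n)) (c := parikh (factor p j n))).
- by exists i.
- by exists i.+1.
- by exists j.
- exact/eqP.
- by apply/eqP => /(parikh_count_eq c) /esym.
- by apply/eqP => /(parikh_count_eq c); rewrite count_c_step => /esym.
Qed.
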